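(* Let $W=W(\Phi)$ be any finite Weyl group, let $u\in W$ be separable, and let $U=[e,u]_R=\{v\in W: v\leq_R u\}$. Then $(W/U,U)$ is a splitting of $W$; that is, the multiplication map $W/U\times U\to W$, $(x,y)\mapsto xy$, is a bijection and satisfies $\ell(xy)=\ell(x)+\ell(y)$ for all $x\in W/U$, $y\in U$.
   Context: $\Phi$ is a finite crystallographic root system with simple roots $\Delta$ and positive roots $\Phi^+$; $W=W(\Phi)$ is its Weyl group, generated by the simple reflections $s_\alpha$, $\alpha\in\Delta$. The length $\ell(w)$ is the minimal number of simple reflections in an expression for $w$. The inversion set is $I_\Phi(w)=\{\beta\in\Phi^+: w\beta\in-\Phi^+\}$, and $\ell(w)=|I_\Phi(w)|$. Left weak order: $v\leq_L w$ iff $I_\Phi(v)\subseteq I_\Phi(w)$ (equivalently $w=zv$ with $\ell(w)=\ell(z)+\ell(v)$); right weak order: $v\leq_R w$ iff $v^{-1}\leq_L w^{-1}$. The root poset on $\Phi^+$: $\beta\leq\beta'$ iff $\beta'-\beta$ is a nonnegative integer combination of simple roots. For $J\subseteq\Delta$, $\Phi_J$ is the set of roots in the span of $J$; more generally for a subsystem $\Phi'=\Phi\cap V$ ($V$ a linear subspace), $w|_{\Phi'}$ denotes the element $w'\in W(\Phi')$ with $I_{\Phi'}(w')=I_\Phi(w)\cap V$. An element $w\in W(\Phi)$ is separable if (S1) $\Phi$ is of type $A_1$; or (S2) $\Phi=\bigoplus_i\Phi_i$ is reducible and each $w|_{\Phi_i}$ is separable; or (S3) $\Phi$ is irreducible and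 there is $\alpha_i\in\Delta$ (a pivot) such that $w|_{\Phi_J}$ is separable for $J=\Delta\setminus\{\alpha_i\}$, and either $\{\beta\in\Phi^+:\beta\geq\alpha_i\}\subseteq I_\Phi(w)$ or $\{\beta\in\Phi^+:\beta\geq\alpha_i\}\cap I_\Phi(w)=\emptyset$. For $U\subseteq W$, the generalized quotient is $W/U=\{w\in W: \ell(wu)=\ell(w)+\ell(u)\ \forall u\in U\}$. A pair $(X,Y)$ of subsets of $W$ is a splitting of $W$ if the map $X\times Y\to W$, $(x,y)\mapsto xy$, is a bijection with $\ell(xy)=\ell(x)+\ell(y)$ for all $x\in X,y\in Y$. *)

(* Root systems are modelled concretely as finite sets of
   column vectors in R^n (R any real field) with the standard inner product;
   Weyl group elements are n x n matrices acting on the left. *)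
From HB Require Import structures.
From mathcomp Require Import all_boot all_order all_algebra.
From Stdlib Require Import ClassicalEpsilon.
Set Implicit Arguments. Unset Strict Implicit. Unset Printing Implicit Defensive.
Import Order.TTheory GRing.Theory Num.Theory.
Local Open Scope ring_scope.

Section RootSystems.
Variables (R : realFieldType) (n r : nat).
Notation vec := 'cV[R]_n.
Notation mat := 'M[R]_n.

Definition dotv (u v : vec) : R := (u^T *m v) 0 0.

(* the reflection s_a as a matrix: s_a v = v - (2 (a,v)/(a,a)) a *)
Definition refl (a : vec) : mat := 1%:M - (2 / dotv a a) *: (a *m a^T).

(* finite, reduced, crystallographic root system (not required to span) *)
Definition root_system (Phi : seq vec) : Prop :=
  [/\ 0 \notin Phi,
      (forall a b, a \in Phi -> b \in Phi -> refl a *m b \in Phi),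
      (forall a b, a \in Phi -> b \in Phi ->
         exists z : int, 2 * dotv a b / dotv a a = z%:~R) &
      (forall a (c : R), a \in Phi -> c *: a \in Phi -> c = 1 \/ c = -1)].

Definition nncomb (Delta : 'I_r -> vec) (b : vec) : Prop :=
  exists c : 'I_r -> nat, b = \sum_(i < r) (c i)%:R *: Delta i.

Definition simple_system (Phi : seq vec) (Delta : 'I_r -> vec) : Prop :=
  [/\ (forall i, Delta i \in Phi),
      (forall c : 'I_r -> R, \sum_(i < r) c i *: Delta i = 0 -> forall i, c i = 0) &
      (forall b, b \in Phi -> nncomb Delta b \/ nncomb Delta (- b))].

Definition posroot (Phi : seq vec) (Delta : 'I_r -> vec) (b : vec) : Prop :=
  b \in Phi /\ nncomb Delta b.

Definition rootle (Delta : 'I_r -> vec) (b b' : vec) : Prop := nncomb Delta (b' - b).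

Definition in_span (Delta : 'I_r -> vec) (J : {set 'I_r}) (b : vec) : Prop :=
  exists c : 'I_r -> R, b = \sum_(i in J) c i *: Delta i.

Definition word_mx (Delta : 'I_r -> vec) (s : seq 'I_r) : mat :=
  foldr (fun i m => refl (Delta i) *m m) 1%:M s.

Definition inW (Delta : 'I_r -> vec) (w : mat) : Prop :=
  exists s, w = word_mx Delta s.

Definition is_length (Delta : 'I_r -> vec) (w : mat) (k : nat) : Prop :=
  (exists s, size s = k /\ w = word_mx Delta s) /\
  (forall s, w = word_mx Delta s -> (k <= size s)%N).

Definition ell (Delta : 'I_r -> vec) (w : mat) : nat :=
  epsilon (inhabits 0%N) (is_length Delta w).

Definition inv_set (Phi : seq vec) (Delta : 'I_r -> vec) (w : mat) (b : vec) : Prop :=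
  posroot Phi Delta b /\ posroot Phi Delta (- (w *m b)).

Definition leL (Phi : seq vec) (Delta : 'I_r -> vec) (v w : mat) : Prop :=
  forall b, inv_set Phi Delta v b -> inv_set Phi Delta w b.

Definition leR (Phi : seq vec) (Delta : 'I_r -> vec) (v w : mat) : Prop :=
  leL Phi Delta (invmx v) (invmx w).

Definition irreducible_sub (Phi : seq vec) (Delta : 'I_r -> vec) (J : {set 'I_r}) : Prop :=
  (exists b, b \in Phi /\ in_span Delta J b) /\
  forall P : vec -> Prop,
    (forall b c, b \in Phi -> in_span Delta J b -> c \in Phi -> in_span Delta J c ->
        P b -> ~ P c -> dotv b c = 0) ->
    (forall b, b \in Phi -> in_span Delta J b -> P b) \/
    (forall b, b \in Phi -> in_span Delta J b -> ~ P b).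

(* sep_sub Phi Delta w J : the restriction w|_{Phi_J} (the element of W(Phi_J)
   with inversion set I_Phi(w) cap span J) is separable.  Phi_J has simple
   roots J and positive roots Phi^+ cap span J. *)
Inductive sep_sub (Phi : seq vec) (Delta : 'I_r -> vec) (w : mat) : {set 'I_r} -> Prop :=
| sep_A1 (i : 'I_r) : sep_sub Phi Delta w [set i]
| sep_red (J1 J2 : {set 'I_r}) :
    J1 != set0 -> J2 != set0 -> [disjoint J1 & J2] ->
    (forall i j, i \in J1 -> j \in J2 -> dotv (Delta i) (Delta j) = 0) ->
    sep_sub Phi Delta w J1 -> sep_sub Phi Delta w J2 ->
    sep_sub Phi Delta w (J1 :|: J2)
| sep_irr (J : {set 'I_r}) (i : 'I_r) :
    irreducible_sub Phi Delta J -> i \in J ->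
    sep_sub Phi Delta w (J :\ i) ->
    ((forall b, posroot Phi Delta b -> in_span Delta J b -> rootle Delta (Delta i) b ->
        inv_set Phi Delta w b) \/
     (forall b, posroot Phi Delta b -> in_span Delta J b -> rootle Delta (Delta i) b ->
        ~ inv_set Phi Delta w b)) ->
    sep_sub Phi Delta w J.

Definition separable (Phi : seq vec) (Delta : 'I_r -> vec) (w : mat) : Prop :=
  sep_sub Phi Delta w [set: 'I_r].

Definition gquot (Delta : 'I_r -> vec) (U : mat -> Prop) (w : mat) : Prop :=
  inW Delta w /\ forall u, U u -> ell Delta (w *m u) = (ell Delta w + ell Delta u)%N.

Definition splitting (Delta : 'I_r -> vec) (X Y : mat -> Prop) : Prop :=
  [/\ (forall x y, X x -> Y y -> inW Delta (x *m y)),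
      (forall w, inW Delta w -> exists x y, [/\ X x, Y y & w = x *m y]),
      (forall x y x' y', X x -> Y y -> X x' -> Y y' -> x *m y = x' *m y' ->
         x = x' /\ y = y') &
      (forall x y, X x -> Y y -> ell Delta (x *m y) = (ell Delta x + ell Delta y)%N)].

End RootSystems.

(* Weyl group elements are orthogonal, so [u^-1] is [u^T] throughout.  Put
   B = I(u^-1).  By the length formula l(xy) = l(x) + l(y) - 2|I(x) cap I(y^-1)|,
   W/U consists of the x with I(x) cap B empty, and U = [e,u]_R of the y with
   I(y^-1) included in B; so the theorem says that every w factors uniquely as
   w = x y with these two properties.  This factorization property is proved in
   every parabolic subgroup W_J, following the recursive definition of the
   separability of u|_J.  For A1 it is immediate, and for an orthogonal splitting
   J = J1 + J2 it is the product of the factorizations in W_J1 and W_J2.  At a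
   pivot alpha_i, either no root of Phi_J^+ above alpha_i is inverted, so that u
   lies in W_(J\i) and factorizations lift along W_J = W^(J\i) W_(J\i); or all
   of them are, and then u = m c with c in W_(J\i) and m inverting exactly
   Phi_J^+ \ Phi_(J\i).  A height argument shows that m then maps the simple
   roots of J\i onto simple roots J', so conjugation by m carries the
   factorizations of W_(J\i) to those of W_J = W_J' W^J'. *)

From HB Require Import structures.
From mathcomp Require Import all_boot all_order all_algebra.
From Stdlib Require Import ClassicalEpsilon.
From mathcomp Require Import ring lra zify.
Set Implicit Arguments. Unset Strict Implicit. Unset Printing Implicit Defensive.
Import Order.TTheory GRing.Theory Num.Theory.
Local Open Scope ring_scope.

Section Reflections.
Variables (R : realFieldType) (n : nat).
Implicit Types (a b v : 'cV[R]_n) (g h : 'M[R]_n).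

Lemma mulmx_colP (A B : 'M[R]_n) : (forall v, A *m v = B *m v) -> A = B.
Proof.
move=> AB; apply/trmx_inj/eqP/mulmxP => v.
by rewrite -[v]trmxK -!trmx_mul AB.
Qed.

Lemma dotvC a b : dotv a b = dotv b a.
Proof. by rewrite /dotv -[_ *m b]trmxK trmx_mul trmxK mxE. Qed.

Lemma dotvDr a b v : dotv a (b + v) = dotv a b + dotv a v.
Proof. by rewrite /dotv mulmxDr mxE. Qed.

Lemma dotvZr a b (c : R) : dotv a (c *: b) = c * dotv a b.
Proof. by rewrite /dotv -scalemxAr mxE. Qed.

Lemma dotv_sumr a (I : finType) (P : pred I) (F : I -> 'cV[R]_n) :
  dotv a (\sum_(i | P i) F i) = \sum_(i | P i) dotv a (F i).
Proof. by rewrite /dotv mulmx_sumr summxE. Qed.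

Lemma dotvBr a b v : dotv a (b - v) = dotv a b - dotv a v.
Proof. by rewrite dotvDr -scaleN1r dotvZr mulN1r. Qed.

Lemma dotvv_gt0 a : a != 0 -> 0 < dotv a a.
Proof.
move=> a0; have sq k : 0 <= a k 0 * a k 0 by rewrite -expr2 sqr_ge0.
have -> : dotv a a = \sum_k a k 0 * a k 0.
  by rewrite /dotv mxE; apply: eq_bigr => k _; rewrite mxE.
rewrite lt_def sumr_ge0 ?andbT //; apply: contraNN a0 => /eqP/psumr_eq0P sum0.
apply/eqP/matrixP => k j; rewrite ord1 !mxE.
by have /eqP := sum0 (fun k _ => sq k) k isT; rewrite mulf_eq0 orbb => /eqP.
Qed.

Lemma mul_refl a v : refl a *m v = v - (2 / dotv a a * dotv a v) *: a.
Proof.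
rewrite /refl mulmxBl mul1mx -scalemxAl -mulmxA [a^T *m v]mx11_scalar.
by rewrite mul_mx_scalar scalerA.
Qed.

Lemma mul_refl_self a : a != 0 -> refl a *m a = - a.
Proof.
move=> a0; rewrite mul_refl divfK ?gt_eqF ?dotvv_gt0 //.
by rewrite scaler_nat mulr2n opprD addrA subrr add0r.
Qed.

Lemma mul_refl_orth a b : dotv a b = 0 -> refl a *m b = b.
Proof. by move=> ab; rewrite mul_refl ab mulr0 scale0r subr0. Qed.

Lemma refl_invol a : a != 0 -> refl a *m refl a = 1%:M.
Proof.
move=> a0; apply: mulmx_colP => v; rewrite -mulmxA mul1mx !mul_refl dotvBr dotvZr.
have aa0 : dotv a a != 0 by rewrite gt_eqF ?dotvv_gt0.
set c := 2 / dotv a a * dotv a v.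
have -> : 2 / dotv a a * (dotv a v - c * dotv a a) = - c by rewrite /c; field.
by rewrite scaleNr opprK subrK.
Qed.

Lemma refl_comm a b : dotv a b = 0 -> refl a *m refl b = refl b *m refl a.
Proof.
move=> ab; have ba : dotv b a = 0 by rewrite dotvC.
apply: mulmx_colP => v; rewrite -!mulmxA !(mul_refl a) !(mul_refl b) !dotvBr !dotvZr.
by rewrite ab ba !mulr0 !subr0 addrAC.
Qed.

Lemma trmx_refl a : (refl a)^T = refl a.
Proof. by rewrite /refl linearB /= trmx1 linearZ /= trmx_mul trmxK. Qed.

Definition orthmx g := g^T *m g = 1%:M.

Lemma orthmx1 : orthmx 1%:M.
Proof. by rewrite /orthmx trmx1 mulmx1. Qed.

Lemma orthmx_refl a : a != 0 -> orthmx (refl a).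
Proof. by move=> a0; rewrite /orthmx trmx_refl refl_invol. Qed.

Lemma orthmx_mul g h : orthmx g -> orthmx h -> orthmx (g *m h).
Proof.
rewrite /orthmx trmx_mul => gK hK.
by rewrite mulmxA -[h^T *m g^T *m g]mulmxA gK mulmx1.
Qed.

Lemma dotv_orthmx g a b : orthmx g -> dotv (g *m a) (g *m b) = dotv a b.
Proof. by move=> gK; rewrite /dotv trmx_mul -mulmxA [g^T *m _]mulmxA gK mul1mx. Qed.

Lemma refl_conj g a : orthmx g -> g *m refl a *m g^T = refl (g *m a).
Proof.
move=> gK; rewrite /refl dotv_orthmx // mulmxBr mulmx1 mulmxBl mulmx1C //.
by rewrite -scalemxAr -scalemxAl !mulmxA trmx_mul !mulmxA.
Qed.

End Reflections.

Section RootSystem.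
Variables (R : realFieldType) (n r : nat).
Variables (Phi : seq 'cV[R]_n) (Delta : 'I_r -> 'cV[R]_n).
Hypothesis rootPhi : root_system Phi.
Hypothesis simpleDelta : simple_system Phi Delta.
Local Notation vec := 'cV[R]_n.
Local Notation mat := 'M[R]_n.
Local Notation s i := (refl (Delta i)).
Local Notation word := (word_mx Delta).
Local Notation isW := (inW Delta).
Local Notation pos := (posroot Phi Delta).
Implicit Types (b : vec) (g h w x y : mat) (i j k : 'I_r) (t : seq 'I_r).

Lemma root_neq0 b : b \in Phi -> b != 0.
Proof. by case: rootPhi => Phi0 _ _ _; apply: contraTneq => ->. Qed.

Lemma refl_root (a : vec) b : a \in Phi -> b \in Phi -> refl a *m b \in Phi.
Proof. by case: rootPhi => _ + _ _; apply. Qed.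

Lemma oppr_root b : b \in Phi -> - b \in Phi.
Proof. by move=> Hb; rewrite -mul_refl_self ?root_neq0 ?refl_root. Qed.

Lemma simple_root i : Delta i \in Phi.
Proof. by case: simpleDelta. Qed.

Lemma simple_neq0 i : Delta i != 0.
Proof. exact/root_neq0/simple_root. Qed.

Lemma reflK i : s i *m s i = 1%:M.
Proof. exact/refl_invol/simple_neq0. Qed.

Lemma mul_refl_simple i : s i *m Delta i = - Delta i.
Proof. exact/mul_refl_self/simple_neq0. Qed.

(** * Coordinates and positive roots *)

Definition simple_mx : 'M[R]_(r, n) := \matrix_i (Delta i)^T.

Lemma simple_mx_free : row_free simple_mx.
Proof.
apply: inj_row_free => v /(congr1 trmx); rewrite mulmx_sum_row linear_sum linear0 /=.
under eq_bigr do rewrite rowK linearZ /= trmxK.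
by case: simpleDelta => _ indep _ /indep v0; apply/rowP => i; rewrite v0 mxE.
Qed.

(* Coordinates in the basis [Delta]; they are meaningful only on the span of
   [Phi]. *)
Definition coef k b := (b^T *m pinvmx simple_mx) 0 k.

Lemma coefD k b (c : vec) : coef k (b + c) = coef k b + coef k c.
Proof. by rewrite /coef linearD /= mulmxDl mxE. Qed.

Lemma coefZ k (z : R) b : coef k (z *: b) = z * coef k b.
Proof. by rewrite /coef linearZ /= -scalemxAl mxE. Qed.

Lemma coefN k b : coef k (- b) = - coef k b.
Proof. by rewrite -scaleN1r coefZ mulN1r. Qed.

Lemma coefB k b (c : vec) : coef k (b - c) = coef k b - coef k c.
Proof. by rewrite coefD coefN. Qed.

Lemma coef_sum k (I : finType) (P : pred I) (F : I -> vec) :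
  coef k (\sum_(i | P i) F i) = \sum_(i | P i) coef k (F i).
Proof. by apply: big_morph; [exact: coefD | rewrite /coef linear0 mul0mx mxE]. Qed.

Lemma coef_simple k j : coef k (Delta j) = (j == k)%:R.
Proof.
rewrite /coef; have -> : (Delta j)^T = row j simple_mx by rewrite /simple_mx rowK.
by rewrite -row_mul mulmxVp ?simple_mx_free // row1 !mxE eqxx eq_sym.
Qed.

Lemma coef_comb k (z : 'I_r -> R) : coef k (\sum_i z i *: Delta i) = z k.
Proof.
rewrite coef_sum (bigD1 k) //= big1 ?addr0 => [|i /negbTE ik].
  by rewrite coefZ coef_simple eqxx mulr1.
by rewrite coefZ coef_simple ik mulr0.
Qed.

Lemma span_coef (z : 'I_r -> R) b :
  b = \sum_i z i *: Delta i -> b = \sum_i coef i b *: Delta i.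
Proof. by move=> ->; apply: eq_bigr => i _; rewrite coef_comb. Qed.

Lemma root_span b : b \in Phi -> b = \sum_i coef i b *: Delta i.
Proof.
case: simpleDelta => _ _ /[apply] -[[z Eb]|[z Eb]]; first exact: span_coef Eb.
apply: (@span_coef (fun i => - (z i)%:R)); rewrite -[b]opprK Eb -sumrN.
by apply: eq_bigr => i _; rewrite scaleNr.
Qed.

Lemma root_coef_neq0 b : b \in Phi -> exists k, coef k b != 0.
Proof.
move=> Hb; apply/existsP; apply: contraTT (root_neq0 Hb) => /existsPn b0.
rewrite negbK {1}(root_span Hb) big1 // => i _.
by have /negPn/eqP -> := b0 i; rewrite scale0r.
Qed.

Lemma pos_root b : pos b -> b \in Phi.
Proof. by case. Qed.

Lemma pos_coef_nat b k : pos b -> exists m : nat, coef k b = m%:R.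
Proof. by case=> _ [z Eb]; exists (z k); rewrite Eb coef_comb. Qed.

Lemma pos_coef_ge0 b k : pos b -> 0 <= coef k b.
Proof. by move=> /(pos_coef_nat k) [m ->]; rewrite ler0n. Qed.

Lemma pos_or_neg b : b \in Phi -> pos b \/ pos (- b).
Proof.
move=> Hb; case: simpleDelta => _ _ /(_ b Hb) [] ?; [left | right] => //.
by split; first exact: oppr_root.
Qed.

Lemma pos_oppN b : pos b -> ~ pos (- b).
Proof.
move=> Pb Nb; have [k] := root_coef_neq0 (pos_root Pb).
by rewrite eq_le pos_coef_ge0 // andbT -oppr_ge0 -coefN pos_coef_ge0.
Qed.

Lemma pos_coef b : b \in Phi -> (forall k, 0 <= coef k b) -> pos b.
Proof.
move=> Hb b_ge0; case: (pos_or_neg Hb) => // Nb.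
have [k] := root_coef_neq0 Hb.
by rewrite eq_le b_ge0 andbT -oppr_ge0 -coefN pos_coef_ge0.
Qed.

Lemma pos_coef_gt0 b k : b \in Phi -> 0 < coef k b -> pos b.
Proof.
move=> Hb bk_gt0; case: (pos_or_neg Hb) => // /(pos_coef_ge0 k).
by rewrite coefN oppr_ge0 leNgt bk_gt0.
Qed.

Lemma pos_simple i : pos (Delta i).
Proof. by apply: pos_coef (simple_root i) _ => k; rewrite coef_simple ler0n. Qed.

Definition posb b := (b \in Phi) && [forall k, 0 <= coef k b].

Lemma posP b : reflect (pos b) (posb b).
Proof.
apply: (iffP andP) => [[Hb /forallP]|Pb]; first exact: pos_coef.
by split; [exact: pos_root | apply/forallP => k; exact: pos_coef_ge0].
Qed.

Lemma posbN b : b \in Phi -> posb (- b) = ~~ posb b.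
Proof.
move=> Hb; apply/idP/idP => [/posP Nb|/negP nPb].
  by apply/negP => /posP /pos_oppN.
by apply/posP; case: (pos_or_neg Hb) => // /posP.
Qed.

Lemma coef_refl k i b : k != i -> coef k (s i *m b) = coef k b.
Proof. by move=> ki; rewrite mul_refl coefB coefZ coef_simple eq_sym (negbTE ki) mulr0 subr0. Qed.

(* A positive root other than [Delta i] has a positive coordinate off [i],
   which [s i] does not change; reducedness excludes multiples of [Delta i]. *)
Lemma pos_refl i b : pos b -> b != Delta i -> pos (s i *m b).
Proof.
move=> Pb bi; have Hb := pos_root Pb.
case: (pos_or_neg (refl_root (simple_root i) Hb)) => // Nsb; exfalso.
have b_off k : k != i -> coef k b = 0.
  move=> ki; apply/eqP; rewrite eq_le pos_coef_ge0 // andbT.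
  by rewrite -(coef_refl b ki) -oppr_ge0 -coefN pos_coef_ge0.
have Eb : b = coef i b *: Delta i.
  rewrite {1}(root_span Hb) (bigD1 i) //= big1 ?addr0 // => k ki.
  by rewrite b_off // scale0r.
case: rootPhi => _ _ _ /(_ (Delta i) (coef i b) (simple_root i)).
rewrite -Eb => /(_ Hb) [bi1|bi1]; first by move: bi; rewrite Eb bi1 scale1r eqxx.
by have := pos_coef_ge0 i Pb; rewrite bi1; lra.
Qed.

Lemma word_cat t1 t2 : word (t1 ++ t2) = word t1 *m word t2.
Proof. by elim: t1 => [|i t IH] /=; rewrite ?mul1mx // IH mulmxA. Qed.

Lemma orthmx_word t : orthmx (word t).
Proof. by elim: t => [|i t IH] /=; [exact: orthmx1 | exact/orthmx_mul/IH/orthmx_refl/simple_neq0]. Qed.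

Lemma trmx_word t : (word t)^T = word (rev t).
Proof.
elim: t => [|i t IH] /=; first by rewrite trmx1.
by rewrite trmx_mul IH trmx_refl rev_cons -cats1 word_cat /= mulmx1.
Qed.

Lemma inW_orthmx w : isW w -> orthmx w.
Proof. by case=> t ->; exact: orthmx_word. Qed.

Lemma inW_root w b : isW w -> b \in Phi -> w *m b \in Phi.
Proof.
case=> t -> {w}; elim: t b => [|i t IH] b Hb /=; first by rewrite mul1mx.
by rewrite -mulmxA refl_root ?simple_root ?IH.
Qed.

Lemma inW_tr w : isW w -> isW w^T.
Proof. by case=> t ->; exists (rev t); rewrite trmx_word. Qed.

Lemma inW_mul g h : isW g -> isW h -> isW (g *m h).
Proof. by case=> t -> [t' ->]; exists (t ++ t'); rewrite word_cat. Qed.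

Lemma inW1 : isW 1%:M.
Proof. by exists [::]. Qed.

Lemma inW_refl i : isW (s i).
Proof. by exists [:: i]; rewrite /= mulmx1. Qed.

Section WeylCancel.
Variables (p : nat) (w : mat).
Hypothesis Ww : isW w.

Lemma mulKtrmx : cancel (@mulmx _ n n p w) (mulmx w^T).
Proof. by move=> A; rewrite mulmxA inW_orthmx // mul1mx. Qed.

Lemma mulKVtrmx : cancel (@mulmx _ n n p w^T) (mulmx w).
Proof. by move=> A; rewrite mulmxA mulmx1C ?inW_orthmx // mul1mx. Qed.

Lemma mulmxKtr : cancel (@mulmx _ p n n ^~ w) (mulmx ^~ w^T).
Proof. by move=> A; rewrite -mulmxA mulmx1C ?inW_orthmx // mulmx1. Qed.

Lemma mulmxKVtr : cancel (@mulmx _ p n n ^~ w^T) (mulmx ^~ w).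
Proof. by move=> A; rewrite -mulmxA inW_orthmx // mulmx1. Qed.

End WeylCancel.

Lemma inW_mulmxtr w : isW w -> w *m w^T = 1%:M.
Proof. by move/inW_orthmx/mulmx1C. Qed.

(** * Inversions and length *)

Local Notation inverts := (inv_set Phi Delta).

Definition invb w b := posb b && posb (- (w *m b)).

Lemma invbP w b : reflect (inverts w b) (invb w b).
Proof. by apply: (iffP andP) => -[/posP ? /posP ?]. Qed.

Definition ninv w := count (invb w) (undup Phi).

Definition ncommon x y := count (fun c => invb x c && invb y^T c) (undup Phi).

Lemma count_roots_can (f g : vec -> vec) (P : pred vec) :
  {in Phi, forall b, f b \in Phi} -> {in Phi, forall b, g b \in Phi} ->
  {in Phi, cancel f g} -> {in Phi, cancel g f} ->
  count P (undup Phi) = count (P \o f) (undup Phi).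
Proof.
move=> fPhi gPhi fK gK; transitivity (count P (map f (undup Phi))); last exact: count_map.
suff fPerm : perm_eq (undup Phi) (map f (undup Phi)) by exact: (elimT permP fPerm P).
apply: uniq_perm; first exact: undup_uniq.
  rewrite map_inj_in_uniq ?undup_uniq // => b c; rewrite !mem_undup => Hb Hc fE.
  by rewrite -(fK b Hb) fE fK.
move=> b; rewrite mem_undup; apply/idP/mapP => [Hb|[c + ->]]; last by rewrite mem_undup => /fPhi.
by exists (g b); rewrite ?mem_undup ?gPhi ?gK.
Qed.

Lemma count_roots_mul w (P : pred vec) : isW w ->
  count P (undup Phi) = count (fun b => P (w *m b)) (undup Phi).
Proof.
move=> Ww; apply: (@count_roots_can _ (mulmx w^T)) => b Hb.
- exact: inW_root.
- exact/inW_root/Hb/inW_tr.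
- exact: mulKtrmx.
- exact: mulKVtrmx.
Qed.

Lemma count_roots_opp (P : pred vec) :
  count P (undup Phi) = count (fun b => P (- b)) (undup Phi).
Proof. by apply: (@count_roots_can _ -%R) => b; rewrite ?opprK // => /oppr_root. Qed.

(* Sort the roots [c] by the signs of [c], [y^T c] and [x c]; the symmetry
   [c |-> -c] identifies two of the classes, and comparing counts gives
   l(xy) = l(x) + l(y) - 2 |I(x) cap I(y^-1)|. *)
Lemma ninv_mul_tr x y : isW x -> isW y ->
  (ninv (x *m y) + 2 * ncommon x y = ninv x + ninv y^T)%N.
Proof.
move=> Wx Wy; have WyT := inW_tr Wy.
pose P c := posb c; pose Q c := posb (y^T *m c); pose S c := posb (- (x *m c)).
have E1 : ninv (x *m y) = count (fun c => Q c && S c) (undup Phi).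
  rewrite /ninv (count_roots_mul _ WyT); apply: eq_count => c.
  by rewrite /invb -mulmxA mulKVtrmx.
have E2 : ninv y^T = count (fun c => P c && ~~ Q c) (undup Phi).
  apply: eq_in_count => c; rewrite mem_undup => Hc.
  by rewrite /invb (posbN (inW_root WyT Hc)).
have E3 : ncommon x y = count (fun c => P c && S c && ~~ Q c) (undup Phi).
  rewrite /ncommon; apply: eq_in_count => c; rewrite mem_undup => Hc.
  by rewrite /invb (posbN (inW_root WyT Hc)) /P /Q /S; case: (posb c).
have E4 : count (fun c => Q c && S c && ~~ P c) (undup Phi) =
          count (fun c => P c && ~~ Q c && ~~ S c) (undup Phi).
  rewrite count_roots_opp; apply: eq_in_count => c; rewrite mem_undup => Hc.
  rewrite /P /Q /S /= !mulmxN opprK posbN // (posbN (inW_root WyT Hc)).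
  rewrite (posbN (inW_root Wx Hc)).
  by case: (posb c); case: (posb (x *m c)); case: (posb (y^T *m c)).
have E0 : ninv x = count (fun c => P c && S c) (undup Phi) by [].
have key : (count (fun c => Q c && S c) (undup Phi)
            + count (fun c => P c && ~~ Q c && ~~ S c) (undup Phi)
            + 2 * count (fun c => P c && S c && ~~ Q c) (undup Phi) =
            count (fun c => P c && S c) (undup Phi) + count (fun c => P c && ~~ Q c) (undup Phi)
            + count (fun c => Q c && S c && ~~ P c) (undup Phi))%N.
  elim: (undup Phi) => //= c l IH.
  by case: (P c); case: (Q c); case: (S c) => /=; lia.
rewrite E4 in key; rewrite E0 E1 E2 E3; lia.
Qed.

Lemma ninv1 : ninv 1%:M = 0%N.
Proof.
rewrite /ninv (eq_in_count (a2 := pred0)) ?count_pred0 // => c.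
by rewrite mem_undup /invb mul1mx => /posbN ->; rewrite andbN.
Qed.

Lemma ninv_tr y : isW y -> ninv y^T = ninv y.
Proof.
move=> Wy; have := ninv_mul_tr inW1 Wy; rewrite mul1mx ninv1.
suff -> : ncommon 1%:M y = 0%N by lia.
rewrite /ncommon (eq_in_count (a2 := pred0)) ?count_pred0 // => c.
by rewrite mem_undup /invb mul1mx => /posbN ->; rewrite andbN.
Qed.

Lemma ninv_mul x y : isW x -> isW y ->
  (ninv (x *m y) + 2 * ncommon x y = ninv x + ninv y)%N.
Proof. by move=> Wx Wy; rewrite ninv_mul_tr ?ninv_tr. Qed.

Lemma ninv_mul_le x y : isW x -> isW y -> (ninv (x *m y) <= ninv x + ninv y)%N.
Proof. by move=> Wx Wy; have := ninv_mul Wx Wy; lia. Qed.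

Lemma inverts_refl i b : inverts (s i) b <-> b = Delta i.
Proof.
split=> [[Pb Nb]|->]; last by split; rewrite ?mul_refl_simple ?opprK; apply: pos_simple.
by apply: contraPeq Nb => bi; exact: pos_oppN (pos_refl Pb bi).
Qed.

Lemma invb_refl i b : invb (s i) b = (b == Delta i).
Proof. by apply/invbP/eqP => /inverts_refl. Qed.

Lemma count_roots_eq1 (a : vec) : a \in Phi -> count (pred1 a) (undup Phi) = 1%N.
Proof. by move=> Ha; rewrite count_uniq_mem ?undup_uniq // mem_undup Ha. Qed.

Lemma ninv_refl i : ninv (s i) = 1%N.
Proof. by rewrite /ninv (eq_count (invb_refl i)) count_roots_eq1 ?simple_root. Qed.

Lemma ncommon_refl w i : ncommon w (s i) = invb w (Delta i).
Proof.
rewrite /ncommon trmx_refl.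
rewrite (eq_count (a2 := fun c => invb w (Delta i) && (c == Delta i))); last first.
  by move=> c; rewrite invb_refl; case: eqP => [->|]; rewrite ?andbT ?andbF.
by case: (invb w (Delta i)); rewrite /= ?count_pred0 ?count_roots_eq1 ?simple_root.
Qed.

Lemma ninv_mul_refl w i : isW w ->
  (ninv (w *m s i) + 2 * invb w (Delta i) = ninv w + 1)%N.
Proof. by move=> Ww; rewrite -ncommon_refl (ninv_mul Ww (inW_refl i)) ninv_refl. Qed.

Lemma exchange t j : pos (- (word t *m Delta j)) ->
  exists t', (size t').+1 = size t /\ word t *m s j = word t'.
Proof.
elim: t => [|i t IH] /=; first by rewrite mul1mx => /(pos_oppN (pos_simple j)).
rewrite -mulmxA => Nb; have Wt : isW (word t) by exists t.
have Hb : word t *m Delta j \in Phi by apply/inW_root/simple_root.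
case: (pos_or_neg Hb) => Pb; last first.
  by have [t' [<- E]] := IH Pb; exists (i :: t'); rewrite /= -mulmxA E.
have Eb : word t *m Delta j = Delta i.
  by apply: contraPeq Nb => bi; exact: pos_oppN (pos_refl Pb bi).
exists t; split => //; rewrite -Eb -(refl_conj _ (orthmx_word t)) mulmxKVtr //.
by rewrite -mulmxA reflK mulmx1.
Qed.

Lemma ninv_word_le t : (ninv (word t) <= size t)%N.
Proof.
elim: t => [|i t IH] /=; first by rewrite ninv1.
have Wt : isW (word t) by exists t.
by rewrite (leq_trans (ninv_mul_le (inW_refl i) Wt)) // ninv_refl add1n ltnS.
Qed.

Lemma deletion t : (ninv (word t) < size t)%N ->
  exists t', (size t').+2 = size t /\ word t' = word t.
Proof.
elim/last_ind: t => [|t j IH]; first by rewrite ninv1.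
rewrite size_rcons -cats1 word_cat /= mulmx1 => lt_tj.
have Wt : isW (word t) by exists t.
have [/IH [t' [St Et]]|ge_t] := ltnP (ninv (word t)) (size t).
  by exists (rcons t' j); rewrite size_rcons -cats1 word_cat /= mulmx1 St Et.
have := ninv_mul_refl j Wt; case: (invbP (word t) (Delta j)) => [[_ Nb] _|_ /=].
  by have [t' [St Et]] := exchange Nb; exists t'; rewrite St Et.
by have := ninv_word_le t; lia.
Qed.

Lemma reduced_word t : exists t', word t' = word t /\ size t' = ninv (word t).
Proof.
have [m] := ubnP (size t); elim: m t => // m IH t lt_tm.
have [/deletion [t' [St' <-]]|ge_t] := ltnP (ninv (word t)) (size t).
  by apply: IH; rewrite -ltnS (leq_trans _ lt_tm) // -St' leqnSn.
by exists t; split => //; apply/eqP; rewrite eqn_leq ge_t ninv_word_le.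
Qed.

Lemma is_length_ninv w : isW w -> is_length Delta w (ninv w).
Proof.
case=> t -> {w}; split=> [|t' ->]; last exact: ninv_word_le.
by have [t' [Et St]] := reduced_word t; exists t'; rewrite Et.
Qed.

Lemma ell_ninv w : isW w -> ell Delta w = ninv w.
Proof.
move=> Ww; have [[t1 [S1 E1]] le1] := is_length_ninv Ww.
have [[t2 [S2 E2]] le2] : is_length Delta w (ell Delta w).
  by apply: (epsilon_spec (inhabits 0%N) (is_length Delta w)); exists (ninv w); apply: is_length_ninv.
by apply/eqP; rewrite eqn_leq -{1}S1 le2 // -S2 le1.
Qed.

Lemma ninv_eq0 w : isW w -> ninv w = 0%N -> w = 1%:M.
Proof.
case=> t -> nt0; have [t' [Et]] := reduced_word t.
by rewrite nt0 -Et => /size0nil ->.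
Qed.

Lemma inW_eq1 w : isW w -> (forall b, ~ inverts w b) -> w = 1%:M.
Proof.
move=> Ww noinv; apply: ninv_eq0 => //.
by rewrite /ninv (eq_count (a2 := pred0)) ?count_pred0 // => b; apply/invbP/noinv.
Qed.

Implicit Types (J K : {set 'I_r}).

Definition supported J b := [forall k, (k \notin J) ==> (coef k b == 0)].

Lemma supportedP J b : reflect (forall k, k \notin J -> coef k b = 0) (supported J b).
Proof.
apply: (iffP forallP) => [supp k kJ|supp k]; first exact/eqP/(implyP (supp k)).
by apply/implyP => /supp ->.
Qed.

Lemma supportedPn J b : reflect (exists2 k, k \notin J & coef k b != 0) (~~ supported J b).
Proof.
rewrite negb_forall; apply: (iffP existsP) => [[k]|[k kJ bk]].
  by rewrite negb_imply => /andP [kJ bk]; exists k.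
by exists k; rewrite negb_imply kJ.
Qed.

Lemma supported_coef J b k : supported J b -> coef k b != 0 -> k \in J.
Proof. by move=> /supportedP bJ; apply: contraR => /bJ ->. Qed.

Lemma supported_simple J i : supported J (Delta i) = (i \in J).
Proof.
apply/supportedP/idP => [supp|iJ k kJ]; last first.
  by rewrite coef_simple; case: eqP iJ kJ => // -> ->.
by apply: contraT => /supp; rewrite coef_simple eqxx => /eqP; rewrite oner_eq0.
Qed.

Lemma supportedN J b : supported J (- b) = supported J b.
Proof. by apply: eq_forallb => k; rewrite coefN oppr_eq0. Qed.

Lemma supportedT b : supported setT b.
Proof. by apply/supportedP => k; rewrite inE. Qed.

Lemma mulmx_comb w (z : 'I_r -> R) :
  w *m (\sum_i z i *: Delta i) = \sum_i z i *: (w *m Delta i).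
Proof. by rewrite mulmx_sumr; apply: eq_bigr => i _; rewrite scalemxAr. Qed.

Lemma trmx_comb w b : isW w -> b \in Phi ->
  b = \sum_l coef l (w *m b) *: (w^T *m Delta l).
Proof. by move=> Ww Hb; rewrite -mulmx_comb -(root_span (inW_root Ww Hb)) mulKtrmx. Qed.

Lemma coef_mul w b l : b \in Phi ->
  coef l (w *m b) = \sum_k coef k b * coef l (w *m Delta k).
Proof.
move=> Hb; rewrite {1}(root_span Hb) mulmx_comb coef_sum.
by apply: eq_bigr => k _; rewrite coefZ.
Qed.

(* A positive root supported on [J] is a nonnegative combination of the simple
   roots of [J], each of which [w] keeps positive. *)
Lemma noninv_supported w J : isW w -> (forall j, j \in J -> ~ inverts w (Delta j)) ->
  forall b, pos b -> supported J b -> ~ inverts w b.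
Proof.
move=> Ww noinvJ b Pb /supportedP bJ [_ Nwb].
apply: pos_oppN Nwb; apply: pos_coef (inW_root Ww (pos_root Pb)) _ => l.
rewrite coef_mul ?pos_root // sumr_ge0 // => k _.
have [kJ|/bJ ->] := boolP (k \in J); last by rewrite mul0r.
apply: mulr_ge0; first exact: pos_coef_ge0.
case: (pos_or_neg (inW_root Ww (simple_root k))) => [/pos_coef_ge0 //|Nk].
by case: (noinvJ k kJ); split => //; apply: pos_simple.
Qed.

Lemma descent w : isW w -> w != 1%:M -> exists i, inverts w (Delta i).
Proof.
move=> Ww; have [/existsP [i /invbP]|/existsPn noinv] := boolP [exists i, invb w (Delta i)].
  by exists i.
rewrite (inW_eq1 Ww) ?eqxx // => b Ib.
apply: (noninv_supported Ww _ (proj1 Ib) (supportedT b) Ib) => j _ /invbP.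
exact/negP/noinv.
Qed.

(** * Parabolic subgroups *)

Definition inWJ J w := exists t, all (fun i => i \in J) t /\ w = word t.

Lemma inWJ_W J w : inWJ J w -> isW w.
Proof. by case=> t [_ ->]; exists t. Qed.

Lemma inWJ1 J : inWJ J 1%:M.
Proof. by exists [::]. Qed.

Lemma inWJ_refl J i : i \in J -> inWJ J (s i).
Proof. by move=> iJ; exists [:: i]; rewrite /= iJ mulmx1. Qed.

Lemma inWJ_mul J g h : inWJ J g -> inWJ J h -> inWJ J (g *m h).
Proof. by case=> t [Jt ->] [t' [Jt' ->]]; exists (t ++ t'); rewrite all_cat Jt Jt' word_cat. Qed.

Lemma inWJ_tr J w : inWJ J w -> inWJ J w^T.
Proof. by case=> t [Jt ->]; exists (rev t); rewrite all_rev Jt trmx_word. Qed.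

Lemma inWJ_subset J K w : J \subset K -> inWJ J w -> inWJ K w.
Proof. by move=> /subsetP JK [t [/allP Jt ->]]; exists t; split => //; apply/allP => i /Jt /JK. Qed.

Lemma inWJ_setT w : isW w -> inWJ setT w.
Proof. by case=> t ->; exists t; split => //; apply/allP => i; rewrite in_setT. Qed.

Lemma coef_inWJ J w b k : inWJ J w -> k \notin J -> coef k (w *m b) = coef k b.
Proof.
case=> t [Jt ->] kJ; elim: t Jt b => [|i t IH] /= => [_ b|/andP [iJ Jt] b].
  by rewrite mul1mx.
by rewrite -mulmxA coef_refl ?IH //; apply: contraNneq kJ => ->.
Qed.

Lemma supported_inWJ J w b : inWJ J w -> supported J (w *m b) = supported J b.
Proof.
move=> Jw; apply: eq_forallb => k.
by case: (boolP (k \in J)) => //= kJ; rewrite (coef_inWJ _ Jw).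
Qed.

Lemma pos_inWJ J w b : inWJ J w -> pos b -> ~~ supported J b -> pos (w *m b).
Proof.
move=> Jw Pb /supportedPn [k kJ bk]; have Wb := inW_root (inWJ_W Jw) (pos_root Pb).
by apply: (pos_coef_gt0 Wb (k := k)); rewrite (coef_inWJ _ Jw kJ) lt_def bk pos_coef_ge0.
Qed.

Lemma inverts_inWJ J w b : inWJ J w -> inverts w b -> supported J b.
Proof. by move=> Jw [Pb Nb]; apply: contraPT Nb => /(pos_inWJ Jw Pb) /pos_oppN. Qed.

Lemma inverts_mul x y b : isW y -> inverts (x *m y) b -> inverts y b \/ inverts x (y *m b).
Proof.
move=> Wy [Pb Nb]; case: (pos_or_neg (inW_root Wy (pos_root Pb))) => [Pyb|Nyb].
  by right; split; rewrite // mulmxA.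
by left.
Qed.

Lemma inWJ_of_inverts J w : isW w -> (forall b, inverts w b -> supported J b) -> inWJ J w.
Proof.
have [m] := ubnP (ninv w); elim: m w => // m IH w lt_wm Ww Jinv.
have [->|w1] := eqVneq w 1%:M; first exact: inWJ1.
have [i Ii] := descent Ww w1.
have iJ : i \in J by rewrite -supported_simple; apply: Jinv.
suff : inWJ J (w *m s i) by move/inWJ_mul/(_ (inWJ_refl iJ)); rewrite -mulmxA reflK mulmx1.
apply: IH (inW_mul Ww (inW_refl i)) _ => [|b /(inverts_mul (inW_refl i)) [/inverts_refl ->|]].
- by have := ninv_mul_refl i Ww; move/invbP: Ii => -> /=; lia.
- by rewrite supported_simple.
- by move/Jinv; rewrite (supported_inWJ _ (inWJ_refl iJ)).
Qed.

Definition inv_disjoint x y := forall b, inverts x b -> ~ inverts y b.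

Lemma ncommon_eq0 x y : ncommon x y = 0%N <-> inv_disjoint x y^T.
Proof.
rewrite /ncommon; split => [c0 b Ib ITb|disj].
  suff : has (fun c => invb x c && invb y^T c) (undup Phi) by rewrite has_count c0.
  apply/hasP; exists b; first by rewrite mem_undup; case: Ib => /pos_root.
  by apply/andP; split; apply/invbP.
apply/eqP; rewrite -leqn0 leqNgt -has_count; apply/hasPn => c _.
by apply/negP => /andP [/invbP Ic /invbP ITc]; apply: disj Ic ITc.
Qed.

Lemma ninv_mul_disjoint x y : isW x -> isW y ->
  (ninv (x *m y) = ninv x + ninv y)%N <-> inv_disjoint x y^T.
Proof.
move=> Wx Wy; have := ninv_mul Wx Wy.
by split => [E|/ncommon_eq0 c0]; [apply/ncommon_eq0 |]; lia.
Qed.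

Lemma leL_mul x y : isW x -> isW y -> inv_disjoint x y^T -> leL Phi Delta y (x *m y).
Proof.
move=> Wx Wy disj b [Pb Nyb]; split => //.
have Hyb := inW_root Wy (pos_root Pb).
have ITyb : inverts y^T (- (y *m b)) by split; rewrite // mulmxN opprK (mulKtrmx Wy).
case: (pos_or_neg (inW_root Wx (oppr_root Hyb))) => [Pxyb|Nxyb].
  by rewrite -mulmxA -mulmxN.
by case: (disj _ (conj Nyb Nxyb) ITyb).
Qed.

Definition coset_min J (a : mat) := forall b, supported J b -> ~ inverts a b.

Lemma parabolic_decomp J w : isW w ->
  exists a c, [/\ isW a, coset_min J a, inWJ J c & w = a *m c].
Proof.
have [m] := ubnP (ninv w); elim: m w => // m IH w lt_wm Ww.
have [/existsP [j /andP [jJ /invbP Ij]]|/existsPn noinvJ] :=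
  boolP [exists j, (j \in J) && invb w (Delta j)].
  have [|a [c [Wa amin Jc Ewsc]]] := IH _ _ (inW_mul Ww (inW_refl j)).
    by have := ninv_mul_refl j Ww; move/invbP: Ij => -> /=; lia.
  exists a, (c *m s j); split => //; first exact/inWJ_mul/inWJ_refl.
  by rewrite mulmxA -Ewsc -mulmxA reflK mulmx1.
exists w, 1%:M; split; rewrite ?mulmx1 //; last exact: inWJ1.
move=> b bJ Ib; apply: (noninv_supported Ww _ (proj1 Ib) bJ Ib) => j jJ /invbP Ij.
by have := noinvJ j; rewrite jJ Ij.
Qed.

Lemma parabolic_decompK J K w : J \subset K -> inWJ K w ->
  exists a c, [/\ inWJ K a, coset_min J a, inWJ J c & w = a *m c].
Proof.
move=> JK Kw; have [a [c [_ amin Jc Ew]]] := parabolic_decomp J (inWJ_W Kw).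
exists a, c; split => //; have -> : a = w *m c^T by rewrite Ew (mulmxKtr (inWJ_W Jc)).
exact: inWJ_mul Kw (inWJ_tr (inWJ_subset JK Jc)).
Qed.

Lemma coset_min_disjoint J (a c : mat) : coset_min J a -> inWJ J c -> inv_disjoint a c^T.
Proof. by move=> amin Jc b Ib ITb; exact: amin b (inverts_inWJ (inWJ_tr Jc) ITb) Ib. Qed.

Lemma coset_min_inverts J (a c : mat) b : isW a -> coset_min J a -> inWJ J c -> supported J b ->
  inverts (a *m c) b <-> inverts c b.
Proof.
move=> Wa amin Jc bJ; split=> [/(inverts_mul (inWJ_W Jc)) [//|Iacb]|].
  by case: (amin _ _ Iacb); rewrite (supported_inWJ _ Jc).
exact: leL_mul Wa (inWJ_W Jc) (coset_min_disjoint amin Jc) b.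
Qed.

Lemma parabolic_decomp_uniq J (a a' c c' : mat) : isW a -> isW a' ->
  coset_min J a -> coset_min J a' -> inWJ J c -> inWJ J c' ->
  a *m c = a' *m c' -> a = a' /\ c = c'.
Proof.
move=> Wa Wa' amin amin' Jc Jc' E.
have Jh : inWJ J (c *m c'^T) := inWJ_mul Jc (inWJ_tr Jc').
have Ea' : a' = a *m (c *m c'^T) by rewrite mulmxA E (mulmxKtr (inWJ_W Jc')).
have h1 : c *m c'^T = 1%:M.
  apply: (inW_eq1 (inWJ_W Jh)) => b Ib; have bJ := inverts_inWJ Jh Ib.
  by apply: (amin' b bJ); rewrite Ea'; apply/(coset_min_inverts Wa amin Jh bJ).
split; first by rewrite Ea' h1 mulmx1.
by rewrite -[c](mulmxKVtr (inWJ_W Jc')) h1 mul1mx.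
Qed.

Lemma parabolic_decompK_left J K w : J \subset K -> inWJ K w ->
  exists g a, [/\ inWJ J g, inWJ K a, coset_min J a^T & w = g *m a].
Proof.
move=> JK /inWJ_tr /(parabolic_decompK JK) [a [c [Ka amin Jc Ew]]].
exists c^T, a^T; rewrite trmxK -trmx_mul -Ew trmxK.
by split => //; apply: inWJ_tr.
Qed.

Lemma parabolic_decomp_left_uniq J (g g' a a' : mat) : isW a -> isW a' ->
  coset_min J a^T -> coset_min J a'^T -> inWJ J g -> inWJ J g' ->
  g *m a = g' *m a' -> g = g' /\ a = a'.
Proof.
move=> Wa Wa' amin amin' Jg Jg' /(congr1 trmx); rewrite !trmx_mul => E.
have [] := parabolic_decomp_uniq (inW_tr Wa) (inW_tr Wa') amin amin' (inWJ_tr Jg) (inWJ_tr Jg') E.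
by move=> /trmx_inj -> /trmx_inj ->.
Qed.

(** * Factorizations along a separable element *)

(* For [J = setT] these are the conditions [x \in W/U] and [y \in U = [e,u]_R],
   expressed through inversion sets. *)
Definition factor J u x y :=
  [/\ inWJ J x, inWJ J y, inv_disjoint x u^T & leL Phi Delta y^T u^T].

Definition splits J u :=
  (forall w, inWJ J w -> exists x y, factor J u x y /\ w = x *m y) /\
  (forall x y x' y', factor J u x y -> factor J u x' y' ->
     x *m y = x' *m y' -> x = x' /\ y = y').

Lemma inverts1 b : ~ inverts 1%:M b.
Proof. by case=> Pb; rewrite mul1mx; apply: pos_oppN. Qed.

Lemma inWJ_set1 i g : inWJ [set i] g -> g = 1%:M \/ g = s i.
Proof.
case=> t [+ ->]; elim: t => [|j t IH] /=; first by left.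
by case/andP => /set1P -> /IH [->|->]; [right; rewrite mulmx1 | left; rewrite reflK].
Qed.

Lemma splits_set1 i u : inWJ [set i] u -> splits [set i] u.
Proof.
have y1 J y : inWJ J y -> leL Phi Delta y^T (1%:M)^T -> y = 1%:M.
  move=> Jy; rewrite trmx1 => Iy; apply/trmx_inj; rewrite trmx1.
  by apply: inW_eq1 (inWJ_W (inWJ_tr Jy)) _ => b /Iy /inverts1.
have x1 x y : factor [set i] (s i) x y -> x = 1%:M.
  case=> Jx _ disj _; case: (inWJ_set1 Jx) => // Ex.
  have Ii : inverts (s i) (Delta i) by apply/inverts_refl.
  by case: (disj (Delta i)); rewrite ?Ex ?trmx_refl.
case/inWJ_set1 => ->; split.
- move=> w Jw; exists w, 1%:M; rewrite mulmx1; split => //.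
  split; rewrite ?trmx1 //; first exact: inWJ1.
  by move=> b _; apply: inverts1.
- move=> x y x' y' [_ Jy _ Iy] [_ Jy' _ Iy'].
  by rewrite (y1 _ _ Jy Iy) (y1 _ _ Jy' Iy') !mulmx1.
- move=> w Jw; exists 1%:M, w; rewrite mul1mx; split => //.
  split => //; first exact: inWJ1.
    by move=> b /inverts1.
  by case: (inWJ_set1 (inWJ_tr Jw)) => ->; [move=> b /inverts1 | rewrite trmx_refl].
- by move=> x y x' y' /x1 -> /x1 ->; rewrite !mul1mx.
Qed.

(** * Orthogonal parabolic subgroups *)

Definition orthJ J1 J2 := forall i j, i \in J1 -> j \in J2 -> dotv (Delta i) (Delta j) = 0.

Lemma orthJ_sym J1 J2 : orthJ J1 J2 -> orthJ J2 J1.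
Proof. by move=> orth12 i j iJ2 jJ1; rewrite dotvC orth12. Qed.

Lemma inWJ_comm J1 J2 g1 g2 : orthJ J1 J2 -> inWJ J1 g1 -> inWJ J2 g2 ->
  g1 *m g2 = g2 *m g1.
Proof.
move=> orth12 [t1 [Jt1 ->]] [t2 [Jt2 ->]].
elim: t1 Jt1 => [|i t1 IH] /=; first by rewrite mul1mx mulmx1.
case/andP => iJ1 /IH; rewrite -mulmxA => -> {IH}; rewrite !mulmxA; congr (_ *m _).
elim: t2 Jt2 => [|j t2 IH] /=; first by rewrite mul1mx mulmx1.
by case/andP => jJ2 /IH; rewrite mulmxA refl_comm ?orth12 // -!mulmxA => ->.
Qed.

Lemma inWJ_regroup J1 J2 (p1 p2 q1 q2 : mat) : orthJ J1 J2 -> inWJ J2 p2 -> inWJ J1 q1 ->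
  p1 *m p2 *m (q1 *m q2) = p1 *m q1 *m (p2 *m q2).
Proof.
move=> orth12 Jp2 Jq1.
by rewrite -!mulmxA (mulmxA p2) -(inWJ_comm orth12 Jq1 Jp2) -mulmxA.
Qed.

Lemma inWJ_union_decomp J1 J2 w : orthJ J1 J2 -> inWJ (J1 :|: J2) w ->
  exists g1 g2, [/\ inWJ J1 g1, inWJ J2 g2 & w = g1 *m g2].
Proof.
move=> orth12 [t [Jt ->]]; elim: t Jt => [|i t IH] /=.
  by exists 1%:M, 1%:M; rewrite mulmx1; split => //; apply: inWJ1.
case/andP => /setUP iJ /IH [g1 [g2 [Jg1 Jg2 ->]]]; case: iJ => iJ.
  by exists (s i *m g1), g2; rewrite mulmxA; split => //; apply/inWJ_mul/Jg1/inWJ_refl.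
exists g1, (s i *m g2); split => //; first exact/inWJ_mul/Jg2/inWJ_refl.
by rewrite !mulmxA (inWJ_comm orth12 Jg1 (inWJ_refl iJ)).
Qed.

Lemma inWJ_fix J1 J2 g b : orthJ J1 J2 -> inWJ J2 g -> b \in Phi -> supported J1 b ->
  g *m b = b.
Proof.
move=> orth12 [t [Jt ->]] Hb /supportedP bJ1; elim: t Jt => [|j t IH] /=.
  by rewrite mul1mx.
case/andP => jJ2 /IH; rewrite -mulmxA => ->; apply: mul_refl_orth.
rewrite {1}(root_span Hb) dotv_sumr big1 // => k _; rewrite dotvZr.
have [kJ1|/bJ1 ->] := boolP (k \in J1); last by rewrite mul0r.
by rewrite dotvC orth12 ?mulr0.
Qed.

Lemma supported_orth_excl J1 J2 b : orthJ J1 J2 -> pos b ->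
  supported J1 b -> supported J2 b -> False.
Proof.
move=> orth12 Pb /supportedP b1 /supportedP b2; have [k bk] := root_coef_neq0 (pos_root Pb).
have kJ1 : k \in J1 by apply: contraNT bk => /b1 ->.
have kJ2 : k \in J2 by apply: contraNT bk => /b2 ->.
by have := dotvv_gt0 (simple_neq0 k); rewrite orth12 ?ltxx.
Qed.

Lemma inverts_orth_excl J1 J2 (p q : mat) b : orthJ J1 J2 -> inWJ J1 p -> inWJ J2 q ->
  inverts p b -> ~ inverts q b.
Proof.
move=> orth12 Jp Jq Ip Iq.
exact: supported_orth_excl orth12 (proj1 Ip) (inverts_inWJ Jp Ip) (inverts_inWJ Jq Iq).
Qed.

(* Elements of orthogonal parabolic subgroups fix each other's roots, so their
   inversion sets just add up. *)
Lemma inverts_union J1 J2 g1 g2 b : orthJ J1 J2 -> inWJ J1 g1 -> inWJ J2 g2 ->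
  inverts (g1 *m g2) b <-> inverts g1 b \/ inverts g2 b.
Proof.
move=> orth12 Jg1 Jg2; have orth21 := orthJ_sym orth12.
split=> [/(inverts_mul (inWJ_W Jg2)) [|I1]|[[Pb Nb]|[Pb Nb]]]; [by right | left | |].
- have := inWJ_fix orth12 (inWJ_tr Jg2) (pos_root (proj1 I1)) (inverts_inWJ Jg1 I1).
  by rewrite (mulKtrmx (inWJ_W Jg2)) => Eb; rewrite -Eb in I1.
- split; rewrite // -mulmxA (inWJ_fix orth12 Jg2 (pos_root Pb)) //.
  exact: inverts_inWJ Jg1 (conj Pb Nb).
- split; rewrite // (inWJ_comm orth12 Jg1 Jg2) -mulmxA (inWJ_fix orth21 Jg1 (pos_root Pb)) //.
  exact: inverts_inWJ Jg2 (conj Pb Nb).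
Qed.

Section OrthogonalUnion.
Variables (J1 J2 : {set 'I_r}) (p1 q1 p2 q2 : mat).
Hypotheses (orth12 : orthJ J1 J2) (Jp1 : inWJ J1 p1) (Jq1 : inWJ J1 q1).
Hypotheses (Jp2 : inWJ J2 p2) (Jq2 : inWJ J2 q2).

Lemma inv_disjoint_union :
  inv_disjoint (p1 *m p2) (q1 *m q2) <-> inv_disjoint p1 q1 /\ inv_disjoint p2 q2.
Proof.
have U1 b := inverts_union b orth12 Jp1 Jp2; have U2 b := inverts_union b orth12 Jq1 Jq2.
split=> [disj|[d1 d2] b /U1 [] Ip /U2 [] Iq].
  by split=> b Ip Iq; apply: (disj b); [apply/U1 | apply/U2 | apply/U1 | apply/U2]; tauto.
- exact: d1 Ip Iq.
- exact: inverts_orth_excl orth12 Jp1 Jq2 Ip Iq.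
- exact: inverts_orth_excl orth12 Jq1 Jp2 Iq Ip.
- exact: d2 Ip Iq.
Qed.

Lemma leL_union :
  leL Phi Delta (p1 *m p2) (q1 *m q2) <-> leL Phi Delta p1 q1 /\ leL Phi Delta p2 q2.
Proof.
have U1 b := inverts_union b orth12 Jp1 Jp2; have U2 b := inverts_union b orth12 Jq1 Jq2.
split=> [sub|[l1 l2] b]; last by case/U1 => [/l1|/l2] Iq; apply/U2; [left | right].
split=> b Ip.
- have Ipp : inverts (p1 *m p2) b by apply/U1; left.
  case/sub/U2: Ipp => // Iq.
  by case: (inverts_orth_excl orth12 Jp1 Jq2 Ip Iq).
- have Ipp : inverts (p1 *m p2) b by apply/U1; right.
  case/sub/U2: Ipp => // Iq.
  by case: (inverts_orth_excl orth12 Jq1 Jp2 Iq Ip).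
Qed.

Lemma inWJ_union_uniq : p1 *m p2 = q1 *m q2 -> p1 = q1 /\ p2 = q2.
Proof.
move=> E; have Wq1 := inWJ_W Jq1.
have Eh : q1^T *m p1 = q2 *m p2^T.
  by rewrite -[q1^T *m p1](mulmxKtr (inWJ_W Jp2)) -(mulmxA q1^T) E (mulKtrmx Wq1).
have J1h : inWJ J1 (q1^T *m p1) := inWJ_mul (inWJ_tr Jq1) Jp1.
have J2h : inWJ J2 (q1^T *m p1) by rewrite Eh; apply: inWJ_mul Jq2 (inWJ_tr Jp2).
have h1 : q1^T *m p1 = 1%:M.
  apply: inW_eq1 (inWJ_W J1h) _ => b Ib; move: (Ib).
  exact: inverts_orth_excl orth12 J1h J2h Ib.
have E1 : p1 = q1 by rewrite -[p1](mulKVtrmx Wq1) h1 mulmx1.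
by split => //; apply: (can_inj (mulKtrmx Wq1)); rewrite -{1}E1.
Qed.

End OrthogonalUnion.

Section ReducibleCase.
Variables (J1 J2 : {set 'I_r}) (g1 g2 : mat).
Hypotheses (orth12 : orthJ J1 J2) (Jg1 : inWJ J1 g1) (Jg2 : inWJ J2 g2).

Lemma trmx_mul_orth p1 p2 : inWJ J1 p1 -> inWJ J2 p2 -> (p1 *m p2)^T = p1^T *m p2^T.
Proof.
move=> Jp1 Jp2; rewrite trmx_mul.
exact: inWJ_comm (orthJ_sym orth12) (inWJ_tr Jp2) (inWJ_tr Jp1).
Qed.

Lemma factor_union x1 x2 y1 y2 :
  inWJ J1 x1 -> inWJ J2 x2 -> inWJ J1 y1 -> inWJ J2 y2 ->
  factor (J1 :|: J2) (g1 *m g2) (x1 *m x2) (y1 *m y2) <->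
  factor J1 g1 x1 y1 /\ factor J2 g2 x2 y2.
Proof.
move=> Jx1 Jx2 Jy1 Jy2; rewrite /factor !trmx_mul_orth //.
have [Jg1T Jg2T] := (inWJ_tr Jg1, inWJ_tr Jg2).
have [Jy1T Jy2T] := (inWJ_tr Jy1, inWJ_tr Jy2).
split=> [[_ _ disj sub]|[[_ _ disj1 sub1] [_ _ disj2 sub2]]].
  have [disj1 disj2] := (inv_disjoint_union orth12 Jx1 Jg1T Jx2 Jg2T).1 disj.
  by have [sub1 sub2] := (leL_union orth12 Jy1T Jg1T Jy2T Jg2T).1 sub.
split; try exact: inWJ_mul (inWJ_subset (subsetUl _ _) _) (inWJ_subset (subsetUr _ _) _).
  exact/(inv_disjoint_union orth12 Jx1 Jg1T Jx2 Jg2T).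
exact/(leL_union orth12 Jy1T Jg1T Jy2T Jg2T).
Qed.

Lemma splits_union : splits J1 g1 -> splits J2 g2 -> splits (J1 :|: J2) (g1 *m g2).
Proof.
move=> [ex1 uniq1] [ex2 uniq2]; split.
  move=> _ /(inWJ_union_decomp orth12) [h1 [h2 [/ex1 [x1 [y1 [f1 ->]]] /ex2 [x2 [y2 [f2 ->]]] ->]]].
  have [[Jx1 Jy1 _ _] [Jx2 Jy2 _ _]] := (f1, f2).
  exists (x1 *m x2), (y1 *m y2); split; first exact/factor_union.
  by rewrite (inWJ_regroup _ _ orth12 Jx2 Jy1).
move=> x y x' y' f f'; have [[Jx Jy _ _] [Jx' Jy' _ _]] := (f, f').
have [x1 [x2 [Jx1 Jx2 Ex]]] := inWJ_union_decomp orth12 Jx.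
have [y1 [y2 [Jy1 Jy2 Ey]]] := inWJ_union_decomp orth12 Jy.
have [x1' [x2' [Jx1' Jx2' Ex']]] := inWJ_union_decomp orth12 Jx'.
have [y1' [y2' [Jy1' Jy2' Ey']]] := inWJ_union_decomp orth12 Jy'.
move: f f'; rewrite Ex Ey Ex' Ey' (inWJ_regroup _ _ orth12 Jx2 Jy1).
rewrite (inWJ_regroup _ _ orth12 Jx2' Jy1').
move=> /(factor_union Jx1 Jx2 Jy1 Jy2) [f1 f2] /(factor_union Jx1' Jx2' Jy1' Jy2') [f1' f2'].
move/(inWJ_union_uniq orth12 (inWJ_mul Jx1 Jy1) (inWJ_mul Jx1' Jy1')
  (inWJ_mul Jx2 Jy2) (inWJ_mul Jx2' Jy2')) => [E1 E2].
by have [-> ->] := uniq1 _ _ _ _ f1 f1' E1; have [-> ->] := uniq2 _ _ _ _ f2 f2' E2.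
Qed.

End ReducibleCase.

(** * The two kinds of pivots *)

Section CosetExtension.
Variables (J K : {set 'I_r}) (u : mat).
Hypotheses (JK : J \subset K) (Ju : inWJ J u).

Lemma factor_inWJ x y : factor K u x y -> inWJ J y.
Proof.
case=> _ Ky _ sub; rewrite -[y]trmxK; apply/inWJ_tr/inWJ_of_inverts.
  exact/inWJ_W/inWJ_tr/Ky.
by move=> b /sub; apply: inverts_inWJ (inWJ_tr Ju).
Qed.

Lemma factor_coset a x y : inWJ K a -> coset_min J a -> inWJ J x -> inWJ J y ->
  factor K u (a *m x) y <-> factor J u x y.
Proof.
move=> Ka amin Jx Jy; have Wa := inWJ_W Ka.
split=> [[_ _ disj sub]|[_ _ disj sub]]; split => //.
- by move=> b Ib; apply: disj; apply/(coset_min_inverts Wa amin Jx (inverts_inWJ Jx Ib)).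
- exact: inWJ_mul Ka (inWJ_subset JK Jx).
- exact: inWJ_subset JK Jy.
move=> b /(inverts_mul (inWJ_W Jx)) [/disj //|Ixb] ITb.
apply: amin Ixb; rewrite (supported_inWJ _ Jx).
exact: inverts_inWJ (inWJ_tr Ju) ITb.
Qed.

Lemma splits_coset : splits J u -> splits K u.
Proof.
move=> [exJ uniqJ]; split.
  move=> _ /(parabolic_decompK JK) [a [c [Ka amin /exJ [x [y [f ->]]] ->]]].
  have [Jx Jy _ _] := f.
  by exists (a *m x), y; rewrite mulmxA; split => //; apply/factor_coset.
move=> x y x' y' f f'.
have [Jy Jy'] := (factor_inWJ f, factor_inWJ f').
have [[Kx _ _ _] [Kx' _ _ _]] := (f, f').
have [a [c [Ka amin Jc Ex]]] := parabolic_decompK JK Kx.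
have [a' [c' [Ka' amin' Jc' Ex']]] := parabolic_decompK JK Kx'.
move: f f'; rewrite Ex Ex' => /(factor_coset Ka amin Jc Jy) fJ /(factor_coset Ka' amin' Jc' Jy') fJ'.
rewrite -!mulmxA => /(parabolic_decomp_uniq (inWJ_W Ka) (inWJ_W Ka') amin amin'
  (inWJ_mul Jc Jy) (inWJ_mul Jc' Jy')) [-> E].
by have [-> ->] := uniqJ _ _ _ _ fJ fJ' E.
Qed.

End CosetExtension.

Definition ht b := \sum_k coef k b.

Lemma ht_simple j : ht (Delta j) = 1.
Proof.
rewrite /ht (bigD1 j) //= coef_simple eqxx big1 ?addr0 // => k kj.
by rewrite coef_simple eq_sym (negbTE kj).
Qed.

Lemma ht_comb (z : 'I_r -> R) (v : 'I_r -> vec) :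
  ht (\sum_k z k *: v k) = \sum_k z k * ht (v k).
Proof.
rewrite /ht; under eq_bigr do rewrite coef_sum.
rewrite exchange_big; apply: eq_bigr => k _.
by rewrite mulr_sumr; apply: eq_bigr => l _; rewrite coefZ.
Qed.

Lemma pos_coef_ge1 b k : pos b -> coef k b != 0 -> 1 <= coef k b.
Proof. by move=> /(pos_coef_nat k) [m ->]; rewrite pnatr_eq0 ler1n lt0n. Qed.

Lemma pos_ht_ge1 b : pos b -> 1 <= ht b.
Proof.
move=> Pb; have [k bk] := root_coef_neq0 (pos_root Pb).
rewrite /ht (bigD1 k) //= -[1]addr0; apply: lerD; first exact: pos_coef_ge1.
by apply: sumr_ge0 => l _; apply: pos_coef_ge0.
Qed.

Lemma pos_ht_le1 b : pos b -> ht b <= 1 -> exists k, b = Delta k.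
Proof.
move=> Pb; have [k bk] := root_coef_neq0 (pos_root Pb).
have bk1 := pos_coef_ge1 Pb bk; have ge0 l : 0 <= coef l b := pos_coef_ge0 l Pb.
rewrite /ht (bigD1 k) //= => hb.
have rest0 : \sum_(l | l != k) coef l b = 0.
  apply/eqP; rewrite eq_le sumr_ge0 ?andbT // -(lerD2l (coef k b)) addr0.
  exact: le_trans hb bk1.
have bk_eq1 : coef k b = 1 by apply/eqP; rewrite eq_le bk1 andbT -[coef k b]addr0 -rest0.
exists k; rewrite {1}(root_span (pos_root Pb)) (bigD1 k) //= big1 ?addr0 => [|l lk].
  by rewrite bk_eq1 scale1r.
by rewrite (psumr_eq0P (fun l _ => ge0 l) rest0 lk) scale0r.
Qed.

Section SimpleImage.
Variables (w : mat) (A A' : {set 'I_r}).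
Hypotheses (Ww : isW w) (wA : forall k, k \in A -> exists2 j, j \in A' & w *m Delta k = Delta j).

Lemma supported_map_simple b : b \in Phi -> supported A b ->
  supported A' (w *m b) /\ (pos b -> pos (w *m b)).
Proof.
move=> Hb /supportedP bA.
have term l k : coef k b * coef l (w *m Delta k) =
    if k \in A then coef k b * coef l (w *m Delta k) else 0.
  by case: ifP => // /negbT /bA ->; rewrite mul0r.
split=> [|Pb].
  apply/supportedP => l lA'; rewrite coef_mul // big1 // => k _; rewrite term.
  case: ifP => // /wA [j jA' ->]; rewrite coef_simple; case: eqP => [jl|]; last by rewrite mulr0.
  by move: lA'; rewrite -jl jA'.
apply: pos_coef (inW_root Ww Hb) _ => l.
rewrite coef_mul // sumr_ge0 // => k _; rewrite term; case: ifP => // /wA [j _ ->].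
by rewrite coef_simple mulr_ge0 ?pos_coef_ge0 ?ler0n.
Qed.

Lemma inWJ_conj g : inWJ A g -> inWJ A' (w *m g *m w^T).
Proof.
case=> t [At ->]; elim: t At => [|k t IH] /=.
  by move=> _; rewrite mulmx1 inW_mulmxtr //; apply: inWJ1.
case/andP => /wA [j jA' wk] /IH Jt.
have -> : w *m (s k *m word t) *m w^T = (w *m s k *m w^T) *m (w *m word t *m w^T).
  by rewrite !mulmxA (mulmxKVtr Ww).
by apply: inWJ_mul Jt; rewrite (refl_conj _ (inW_orthmx Ww)) wk; apply: inWJ_refl.
Qed.

End SimpleImage.

Section PivotConjugation.
Variables (K : {set 'I_r}) (i : 'I_r) (m c : mat).
Local Notation J := (K :\ i).
Hypotheses (Km : inWJ K m) (m_min : coset_min J m).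
Hypothesis m_inv : forall b, pos b -> supported K b -> ~~ supported J b -> inverts m b.
Let Wm : isW m := inWJ_W Km.

Lemma pos_pivot_simple j : j \in J -> pos (m *m Delta j).
Proof.
move=> jJ; case: (pos_or_neg (inW_root Wm (simple_root j))) => // Nj.
have jJ' : supported J (Delta j) by rewrite supported_simple.
by case: (m_min jJ'); split => //; apply: pos_simple.
Qed.

Lemma trmx_simple_cases k : k \in K ->
  (pos (m^T *m Delta k) /\ coef i (m^T *m Delta k) = 0) \/
  (pos (- (m^T *m Delta k)) /\ coef i (m^T *m Delta k) < 0).
Proof.
move=> kK; set d := m^T *m Delta k.
have Hd : d \in Phi := inW_root (inW_tr Wm) (simple_root k).
have md : m *m d = Delta k := mulKVtrmx Wm _.
have dK : supported K d by rewrite (supported_inWJ _ (inWJ_tr Km)) supported_simple.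
case: (pos_or_neg Hd) => [Pd|Nd]; [left | right]; split => //.
  have [/supportedP dJ|dJ] := boolP (supported J d); first by apply: dJ; rewrite !inE eqxx.
  by case: (m_inv Pd dK dJ) => _; rewrite md => /(pos_oppN (pos_simple k)).
have Imd : inverts m (- d) by split; rewrite // mulmxN md opprK; apply: pos_simple.
have /supportedPn [l lJ dl] : ~~ supported J (- d) by apply/negP => /m_min; apply.
have li : l = i.
  move: lJ; rewrite !inE negb_and negbK => /orP [/eqP //|lK].
  by move: dl; rewrite coefN oppr_eq0; move/supportedP: dK => /(_ l lK) ->; rewrite eqxx.
rewrite lt_neqAle -oppr_ge0 -coefN pos_coef_ge0 // andbT.
by move: dl; rewrite li coefN oppr_eq0.
Qed.

(* Write [Delta j = m^T (m Delta j)] in the images [m^T Delta k]: their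
   [i]-coordinates are [<= 0] and must add up to that of [Delta j], namely 0. *)
Lemma pivot_trmx_pos j k : j \in J -> coef k (m *m Delta j) != 0 -> pos (m^T *m Delta k).
Proof.
move=> jJ gk; set g := m *m Delta j.
have gK : supported K g.
  by rewrite (supported_inWJ _ Km) supported_simple (subsetP (subD1set K i)).
have term_le0 l : coef l g * coef i (m^T *m Delta l) <= 0.
  have [->|gl] := eqVneq (coef l g) 0; first by rewrite mul0r.
  case: (trmx_simple_cases (supported_coef gK gl)) => [[_ ->]|[_ neg]]; first by rewrite mulr0.
  by rewrite pmulr_rle0 ?ltW // lt_def gl (pos_coef_ge0 l (pos_pivot_simple jJ)).
have sum0 : \sum_l - (coef l g * coef i (m^T *m Delta l)) = 0.
  rewrite sumrN; apply/eqP; rewrite oppr_eq0; apply/eqP.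
  have ji : j != i by move: jJ; rewrite !inE => /andP [].
  transitivity (coef i (Delta j)); last by rewrite coef_simple (negbTE ji).
  by rewrite {1}(trmx_comb Wm (simple_root j)) coef_sum; apply: eq_bigr => l _; rewrite coefZ.
have nonneg l : 0 <= - (coef l g * coef i (m^T *m Delta l)) by rewrite oppr_ge0.
have /eqP := psumr_eq0P (fun l _ => nonneg l) sum0 (i := k) isT.
rewrite oppr_eq0 mulf_eq0 (negbTE gk) /= => /eqP ik.
by case: (trmx_simple_cases (supported_coef gK gk)) => [[]|[_]] //; rewrite ik ltxx.
Qed.

(* Since [m^T] sends each [Delta k] in the support of [m Delta j] to a positive
   root, heights can only grow: ht (m Delta j) <= ht (Delta j) = 1. *)
Lemma pivot_simple_image j : j \in J -> exists k, m *m Delta j = Delta k.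
Proof.
move=> jJ; apply: pos_ht_le1 (pos_pivot_simple jJ) _.
rewrite -(ht_simple j) {2}(trmx_comb Wm (simple_root j)) ht_comb; apply: ler_sum => k _.
have [->|gk] := eqVneq (coef k (m *m Delta j)) 0; first by rewrite mul0r.
apply: ler_peMr; first exact/pos_coef_ge0/pos_pivot_simple.
exact/pos_ht_ge1/(pivot_trmx_pos jJ gk).
Qed.

Definition pivot_img j := odflt j [pick k | m *m Delta j == Delta k].

Lemma pivot_imgE j : j \in J -> m *m Delta j = Delta (pivot_img j).
Proof.
move=> jJ; rewrite /pivot_img; case: pickP => [k /eqP //|none].
by have [k Ek] := pivot_simple_image jJ; have := none k; rewrite Ek eqxx.
Qed.

Local Notation J' := (pivot_img @: J).

Lemma pivot_img_subset : J' \subset K.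
Proof.
apply/subsetP => _ /imsetP [j jJ ->]; rewrite -supported_simple -pivot_imgE //.
by rewrite (supported_inWJ _ Km) supported_simple (subsetP (subD1set K i)).
Qed.

Lemma pivot_simple k : k \in J -> exists2 j, j \in J' & m *m Delta k = Delta j.
Proof. by move=> kJ; exists (pivot_img k); [apply: imset_f | apply: pivot_imgE]. Qed.

Lemma pivot_trmx_simple k : k \in J' -> exists2 j, j \in J & m^T *m Delta k = Delta j.
Proof. by case/imsetP => j jJ ->; exists j; rewrite // -pivot_imgE // mulKtrmx. Qed.

Lemma pivot_supported b : b \in Phi -> supported J b ->
  supported J' (m *m b) /\ (pos b -> pos (m *m b)).
Proof. exact: (supported_map_simple Wm pivot_simple). Qed.

Lemma pivot_trmx_supported b : b \in Phi -> supported J' b ->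
  supported J (m^T *m b) /\ (pos b -> pos (m^T *m b)).
Proof. by move=> Hb bJ; have := supported_map_simple (inW_tr Wm) pivot_trmx_simple Hb bJ. Qed.

Lemma pos_pivotE b : b \in Phi -> supported J b -> pos (m *m b) <-> pos b.
Proof.
move=> Hb bJ; split=> [Pmb|/(pivot_supported Hb bJ).2 //].
case: (pos_or_neg Hb) => // Nb; case: (pos_oppN Pmb); rewrite -mulmxN.
by apply: (pivot_supported (oppr_root Hb) _).2 Nb; rewrite supportedN.
Qed.

Lemma conj_inWJ g : inWJ J g -> inWJ J' (m *m g *m m^T).
Proof. exact: (inWJ_conj Wm pivot_simple). Qed.

Lemma conj_inWJ_out h : inWJ J' h -> exists2 g, inWJ J g & h = m *m g *m m^T.
Proof.
move=> J'h; exists (m^T *m h *m m).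
  by have := inWJ_conj (inW_tr Wm) pivot_trmx_simple J'h; rewrite trmxK.
by rewrite !mulmxA (inW_mulmxtr Wm) mul1mx (mulmxKtr Wm).
Qed.

Lemma inverts_conj g b : inWJ J g -> supported J b ->
  inverts (m *m g *m m^T) (m *m b) <-> inverts g b.
Proof.
move=> Jg bJ; rewrite /inv_set -!mulmxA (mulKtrmx Wm) -mulmxN.
have gbJ : supported J (- (g *m b)) by rewrite supportedN (supported_inWJ _ Jg).
split=> [[Pmb Nmgb]|[Pb Ngb]].
  have Hb : b \in Phi by rewrite -[b](mulKtrmx Wm); apply: inW_root (inW_tr Wm) (pos_root Pmb).
  have Hgb := oppr_root (inW_root (inWJ_W Jg) Hb).
  by split; [apply/(pos_pivotE Hb bJ) | apply/(pos_pivotE Hgb gbJ)].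
by split; [apply/(pos_pivotE (pos_root Pb) bJ) | apply/(pos_pivotE (pos_root Ngb) gbJ)].
Qed.

Hypothesis Jc : inWJ J c.

Lemma inverts_pivot_conj b : b \in Phi -> supported J b ->
  inverts (m *m c)^T (m *m b) <-> inverts c^T b.
Proof.
move=> Hb bJ; rewrite /inv_set trmx_mul -mulmxA (mulKtrmx Wm).
by split=> -[P N]; split => //; apply/(pos_pivotE Hb bJ).
Qed.

Lemma inverts_pivot_out b : pos b -> supported K b -> ~~ supported J' b ->
  inverts (m *m c)^T b.
Proof.
move=> Pb bK bJ'; set d := m^T *m b.
have Hd : d \in Phi := inW_root (inW_tr Wm) (pos_root Pb).
have md : m *m d = b := mulKVtrmx Wm b.
have dK : supported K d by rewrite (supported_inWJ _ (inWJ_tr Km)).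
have dJ : ~~ supported J d.
  by apply: contra bJ' => dJ; rewrite -md; apply: (pivot_supported Hd dJ).1.
case: (pos_or_neg Hd) => [Pd|Nd].
  by case: (m_inv Pd dK dJ) => _; rewrite md => /(pos_oppN Pb).
have /(pos_inWJ (inWJ_tr Jc) Nd) : ~~ supported J (- d) by rewrite supportedN.
by move=> Pcd; split; rewrite // trmx_mul -mulmxA -mulmxN.
Qed.

Lemma inverts_conj_pullback g b : inWJ J g -> inverts (m *m g *m m^T) b ->
  supported J (m^T *m b) /\ inverts g (m^T *m b).
Proof.
move=> Jg Ib; have bJ' := inverts_inWJ (conj_inWJ Jg) Ib.
have tbJ := (pivot_trmx_supported (pos_root (proj1 Ib)) bJ').1.
by split => //; apply/(inverts_conj Jg tbJ); rewrite (mulKVtrmx Wm).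
Qed.

Lemma trmx_conj g : (m *m g *m m^T)^T = m *m g^T *m m^T.
Proof. by rewrite !trmx_mul trmxK mulmxA. Qed.

Lemma factor_conj xt ht a : inWJ J xt -> inWJ J ht -> inWJ K a -> coset_min J' a^T ->
  factor K (m *m c) (m *m xt *m m^T) (m *m ht *m m^T *m a) <-> factor J c xt ht.
Proof.
move=> Jxt Jht Ka amin; have J'h := conj_inWJ Jht.
have J'hT : inWJ J' (m *m ht *m m^T)^T by rewrite trmx_conj; apply: conj_inWJ (inWJ_tr Jht).
have disj_a := coset_min_disjoint amin J'hT.
have sub_h : leL Phi Delta (m *m ht *m m^T)^T (m *m ht *m m^T *m a)^T.
  by rewrite [X in leL _ _ _ X]trmx_mul; apply: leL_mul (inW_tr (inWJ_W Ka)) (inWJ_W J'hT) disj_a.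
split=> [[_ _ disj sub]|[_ _ disj sub]]; split => //.
- move=> b Ib ITb; have bJ := inverts_inWJ Jxt Ib; have Hb := pos_root (proj1 Ib).
  by apply: (disj (m *m b)); [apply/(inverts_conj Jxt bJ) | apply/(inverts_pivot_conj Hb bJ)].
- move=> b Ib; have bJ := inverts_inWJ (inWJ_tr Jht) Ib; have Hb := pos_root (proj1 Ib).
  apply/(inverts_pivot_conj Hb bJ)/sub/sub_h; rewrite trmx_conj.
  exact/(inverts_conj (inWJ_tr Jht) bJ).
- exact: inWJ_subset pivot_img_subset (conj_inWJ Jxt).
- exact: inWJ_mul (inWJ_subset pivot_img_subset J'h) Ka.
- move=> b Ib; have [tbJ Itb] := inverts_conj_pullback Jxt Ib.
  have Htb := inW_root (inW_tr Wm) (pos_root (proj1 Ib)).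
  by rewrite -[b](mulKVtrmx Wm) => /(inverts_pivot_conj Htb tbJ); apply: disj Itb.
move=> b Ib; have bK : supported K b.
  by apply: inverts_inWJ (inWJ_tr (inWJ_mul (inWJ_subset pivot_img_subset J'h) Ka)) Ib.
have [bJ'|] := boolP (supported J' b); last exact: inverts_pivot_out (proj1 Ib) bK.
move: Ib; rewrite trmx_mul => /(inverts_mul (inWJ_W J'hT)) [IhT|Ia]; last first.
  by case: (amin _ _ Ia); rewrite (supported_inWJ _ J'hT).
have Htb := inW_root (inW_tr Wm) (pos_root (proj1 IhT)).
move: IhT; rewrite trmx_conj => /(inverts_conj_pullback (inWJ_tr Jht)) [tbJ /sub Itb].
by rewrite -[b](mulKVtrmx Wm); apply/(inverts_pivot_conj Htb tbJ).
Qed.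
Lemma splits_conj : splits J c -> splits K (m *m c).
Proof.
move=> [exJ uniqJ].
have conjM p q z : m *m p *m m^T *m (m *m q *m m^T *m z) = m *m (p *m q) *m m^T *m z.
  by rewrite !mulmxA (mulmxKVtr Wm).
split.
  move=> _ /(parabolic_decompK_left pivot_img_subset) [g [a [J'g Ka amin ->]]].
  have [gt Jgt ->] := conj_inWJ_out J'g.
  have [xt [ht [f ->]]] := exJ _ Jgt; have [Jxt Jht _ _] := f.
  exists (m *m xt *m m^T), (m *m ht *m m^T *m a); rewrite conjM.
  by split; first exact/factor_conj.
have xJ' z y : factor K (m *m c) z y -> inWJ J' z.
  case=> Kz _ disj _; apply: inWJ_of_inverts (inWJ_W Kz) _ => b Ib.
  apply: contraT => bJ'; case: (disj b Ib).
  exact: inverts_pivot_out (proj1 Ib) (inverts_inWJ Kz Ib) bJ'.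
have ydec z y : factor K (m *m c) z y -> exists ht a,
    [/\ inWJ J ht, inWJ K a, coset_min J' a^T & y = m *m ht *m m^T *m a].
  case=> _ Ky _ _; have [h [a [J'h Ka amin ->]]] := parabolic_decompK_left pivot_img_subset Ky.
  by have [ht Jht ->] := conj_inWJ_out J'h; exists ht, a.
move=> x y x' y' f f'.
have [[xt Jxt Ex] [xt' Jxt' Ex']] := (conj_inWJ_out (xJ' _ _ f), conj_inWJ_out (xJ' _ _ f')).
have [[ht [a [Jht Ka amin Ey]]] [ht' [a' [Jht' Ka' amin' Ey']]]] := (ydec _ _ f, ydec _ _ f').
move: f f'; rewrite Ex Ey Ex' Ey' !conjM.
move=> /(factor_conj Jxt Jht Ka amin) fJ /(factor_conj Jxt' Jht' Ka' amin') fJ'.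
move/(parabolic_decomp_left_uniq (inWJ_W Ka) (inWJ_W Ka') amin amin'
  (conj_inWJ (inWJ_mul Jxt Jht)) (conj_inWJ (inWJ_mul Jxt' Jht'))) => [E ->].
have /(uniqJ _ _ _ _ fJ fJ') [-> ->] // : xt *m ht = xt' *m ht'.
by apply: (can_inj (mulKtrmx Wm)); apply: (can_inj (mulmxKVtr Wm)).
Qed.

End PivotConjugation.

Lemma supported_subset J K b : J \subset K -> supported J b -> supported K b.
Proof. by move=> /subsetP JK /supportedP bJ; apply/supportedP => k /(contra (JK k)) /bJ. Qed.

Lemma in_span_supported J b : b \in Phi -> supported J b -> in_span Delta J b.
Proof.
move=> Hb /supportedP bJ; exists (coef^~ b); rewrite {1}(root_span Hb) [RHS]big_mkcond /=.
by apply: eq_bigr => k _; case: ifP => // /negbT /bJ ->; rewrite scale0r.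
Qed.

Lemma coef_pivot_neq0 J i b : supported J b -> ~~ supported (J :\ i) b -> coef i b != 0.
Proof.
move=> /supportedP bJ /supportedPn [k]; rewrite !inE negb_and negbK.
by case/orP => [/eqP -> //|/bJ ->]; rewrite eqxx.
Qed.

Lemma rootle_simple b i : pos b -> coef i b != 0 -> rootle Delta (Delta i) b.
Proof.
case=> _ [z Eb] bi; have zi : (0 < z i)%N by move: bi; rewrite Eb coef_comb pnatr_eq0 lt0n.
exists (fun k => if k == i then (z k).-1 else z k).
rewrite Eb (bigD1 i) //= [in RHS](bigD1 i) //= eqxx addrAC; congr (_ + _).
  by rewrite -{1}(prednK zi) -[(z i).-1.+1]addn1 natrD scalerDl scale1r addrK.
by apply: eq_bigr => k /negbTE ->.
Qed.

Lemma inWJ_pivot_none J i u : inWJ J u ->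
  (forall b, pos b -> supported J b -> coef i b != 0 -> ~ inverts u b) -> inWJ (J :\ i) u.
Proof.
move=> Ju none; apply: inWJ_of_inverts (inWJ_W Ju) _ => b Ib.
have bJ := inverts_inWJ Ju Ib; apply: contraT => bJi.
by case: (none b (proj1 Ib) bJ (coef_pivot_neq0 bJ bJi)).
Qed.

(* A root of [Phi_J] outside [Phi_(J :\ i)] is sent by [c^T] to another such
   root, which [u = m c] inverts; hence [m] inverts it. *)
Lemma pivot_all_decomp J i u : i \in J -> inWJ J u ->
  (forall b, pos b -> supported J b -> coef i b != 0 -> inverts u b) ->
  exists m c, [/\ inWJ J m, coset_min (J :\ i) m,
    forall b, pos b -> supported J b -> ~~ supported (J :\ i) b -> inverts m b,
    inWJ (J :\ i) c & u = m *m c].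
Proof.
move=> iJ Ju all; have [m [c [Jm m_min Jc Eu]]] := parabolic_decompK (subD1set J i) Ju.
exists m, c; split => // b Pb bJ bJi; have Jc' := inWJ_tr Jc.
have Pcb : pos (c^T *m b) := pos_inWJ Jc' Pb bJi.
have cbJ : supported J (c^T *m b) by rewrite (supported_inWJ _ (inWJ_subset (subD1set J i) Jc')).
have cbJi : ~~ supported (J :\ i) (c^T *m b) by rewrite (supported_inWJ _ Jc').
have [_] := all _ Pcb cbJ (coef_pivot_neq0 cbJ cbJi).
by rewrite Eu -mulmxA (mulKVtrmx (inWJ_W Jc)).
Qed.

Lemma pivot_root_conds J i b : pos b -> supported J b -> coef i b != 0 ->
  in_span Delta J b /\ rootle Delta (Delta i) b.
Proof. by move=> Pb bJ bi; split; [apply: in_span_supported (pos_root Pb) bJ | apply: rootle_simple]. Qed.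

Definition same_inv_on J u w := forall b, pos b -> supported J b -> inverts u b <-> inverts w b.

Lemma same_inv_on_subset J K u w : J \subset K -> same_inv_on K u w -> same_inv_on J u w.
Proof. by move=> JK agree b Pb bJ; apply: agree Pb (supported_subset JK bJ). Qed.

Lemma same_inv_on_union J1 J2 g1 g2 w : orthJ J1 J2 -> inWJ J1 g1 -> inWJ J2 g2 ->
  same_inv_on (J1 :|: J2) (g1 *m g2) w -> same_inv_on J1 g1 w /\ same_inv_on J2 g2 w.
Proof.
move=> orth12 Jg1 Jg2 agree; split=> b Pb bJ; have := inverts_union b orth12 Jg1 Jg2.
  have := agree b Pb (supported_subset (subsetUl _ _) bJ).
  have : ~ inverts g2 b by move/(inverts_inWJ Jg2); apply: supported_orth_excl orth12 Pb bJ.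
  tauto.
have := agree b Pb (supported_subset (subsetUr _ _) bJ).
have : ~ inverts g1 b by move/(inverts_inWJ Jg1) => bJ1; apply: supported_orth_excl orth12 Pb bJ1 bJ.
tauto.
Qed.

Lemma same_inv_on_coset J (a c : mat) w : isW a -> coset_min J a -> inWJ J c ->
  same_inv_on J (a *m c) w -> same_inv_on J c w.
Proof.
move=> Wa amin Jc agree b Pb bJ.
by have := coset_min_inverts Wa amin Jc bJ; have := agree b Pb bJ; tauto.
Qed.

Lemma sep_sub_splits w J : sep_sub Phi Delta w J ->
  forall u, inWJ J u -> same_inv_on J u w -> splits J u.
Proof.
elim=> {J} [i u Ju _|J1 J2 _ _ _ orth12 _ IH1 _ IH2 u Ju agree|J i _ iJ _ IH pivot u Ju agree].
- exact: splits_set1.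
-
  have [g1 [g2 [Jg1 Jg2 Eu]]] := inWJ_union_decomp orth12 Ju; subst u.
  have [agree1 agree2] := same_inv_on_union orth12 Jg1 Jg2 agree.
  exact: splits_union orth12 Jg1 Jg2 (IH1 g1 Jg1 agree1) (IH2 g2 Jg2 agree2).
have agreeJi := same_inv_on_subset (subD1set J i) agree.
case: pivot => pivot.
  have inv_all b : pos b -> supported J b -> coef i b != 0 -> inverts u b.
    move=> Pb bJ bi; have [S L] := pivot_root_conds Pb bJ bi.
    exact/(agree b Pb bJ)/(pivot b Pb S L).
  have [m [c [Jm m_min m_inv Jc Eu]]] := pivot_all_decomp iJ Ju inv_all; subst u.
  have agree_c := same_inv_on_coset (inWJ_W Jm) m_min Jc agreeJi.
  exact: splits_conj Jm m_min m_inv Jc (IH c Jc agree_c).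
have noinv b : pos b -> supported J b -> coef i b != 0 -> ~ inverts u b.
  move=> Pb bJ bi /(agree b Pb bJ); have [S L] := pivot_root_conds Pb bJ bi.
  exact: pivot b Pb S L.
have Jiu := inWJ_pivot_none Ju noinv.
exact: splits_coset (subD1set J i) Jiu (IH u Jiu agreeJi).
Qed.

Lemma invmx_inW w : isW w -> invmx w = w^T.
Proof.
move=> Ww; have [_ wU] := mulmx1_unit (inW_orthmx Ww).
by rewrite -[RHS]mul1mx -(mulVmx wU) -mulmxA inW_mulmxtr // mulmx1.
Qed.

Lemma splitting_of_splits u : isW u -> splits setT u ->
  splitting Delta (gquot Delta (fun v => isW v /\ leR Phi Delta v u))
                  (fun v => isW v /\ leR Phi Delta v u).
Proof.
move=> Wu [exT uniqT].
have leRE v : isW v -> leR Phi Delta v u <-> leL Phi Delta v^T u^T.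
  by move=> Wv; rewrite /leR !invmx_inW.
have gquotE x : gquot Delta (fun v => isW v /\ leR Phi Delta v u) x <->
    isW x /\ inv_disjoint x u^T.
  split=> [[Wx add]|[Wx disj]]; split=> //.
    apply/(ninv_mul_disjoint Wx Wu).
    rewrite -(ell_ninv Wx) -(ell_ninv Wu) -(ell_ninv (inW_mul Wx Wu)).
    by apply: add; split=> //; apply/leRE.
  move=> y [Wy /(leRE _ Wy) sub].
  rewrite (ell_ninv Wx) (ell_ninv Wy) (ell_ninv (inW_mul Wx Wy)).
  by apply/(ninv_mul_disjoint Wx Wy) => b /disj nb /sub.
have factorE x y : factor setT u x y <->
    gquot Delta (fun v => isW v /\ leR Phi Delta v u) x /\ (isW y /\ leR Phi Delta y u).
  rewrite gquotE; split=> [[Tx Ty disj sub]|[[Wx disj] [Wy /(leRE _ Wy) sub]]].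
    have [Wx Wy] := (inWJ_W Tx, inWJ_W Ty).
    by split; split=> //; apply/(leRE _ Wy).
  by split=> //; apply: inWJ_setT.
split.
- by move=> x y [Wx _] [Wy _]; apply: inW_mul.
- move=> w /inWJ_setT /exT [x [y [/factorE [Xx Yy] ->]]].
  by exists x, y.
- by move=> x y x' y' Xx Yy Xx' Yy'; apply: uniqT; apply/factorE.
- by move=> x y [_ add] Yy; apply: add.
Qed.

End RootSystem.

Theorem theorem4p3 (R : realFieldType) (n r : nat)
    (Phi : seq 'cV[R]_n) (Delta : 'I_r -> 'cV[R]_n) (u : 'M[R]_n) :
  root_system Phi -> simple_system Phi Delta ->
  inW Delta u -> separable Phi Delta u ->
  splitting Delta
    (gquot Delta (fun v => inW Delta v /\ leR Phi Delta v u))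
    (fun v => inW Delta v /\ leR Phi Delta v u).
Proof.
move=> rootPhi simpleDelta Wu sep_u.
apply: (splitting_of_splits rootPhi simpleDelta Wu).
exact: (sep_sub_splits rootPhi simpleDelta sep_u (inWJ_setT Wu) (fun b _ _ => iff_refl _)).
Qed.
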